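(* Let $T$ be a decomposition tree of a distance-hereditary graph $G$, and let $v$ be an internal node of $T$ with left child $v_l$ and right child $v_r$. If $v$ is labeled $\odot$, then $\hat\gamma_p(v)=\hat\gamma_p(v_l)+\hat\gamma_p(v_r)$; otherwise (i.e. $v$ is labeled $\otimes$ or $\oplus$), $\hat\gamma_p(v)=\hat\gamma_0(v)+2\cdot\hat{mty}_{pr}(v)$.
   Context: All graphs are finite, simple, undirected. For a graph $H$ and $S\subseteq V(H)$, $N_H[S]$ is $S$ together with all vertices adjacent to a vertex of $S$, and $H[S]$ is the induced subgraph. Graphs carry a ''twin set'': a single-vertex graph on $x$ has twin set $\{x\}$. For vertex-disjoint graphs $G_l,G_r$ with twin sets $TS(G_l),TS(G_r)$: the true twin operation $G_l\otimes G_r$ has vertex set $V(G_l)\cup V(G_r)$, edge set $E(G_l)\cup E(G_r)\cup\{uw: u\in TS(G_l), w\in TS(G_r)\}$ and twin set $TS(G_l)\cup TS(G_r)$; the false twin operation $G_l\odot G_r$ has vertex set $V(G_l)\cup V(G_r)$, edge set $E(G_l)\cup E(G_r)$ and twin set $TS(G_l)\cup TS(G_r)$; the attachment operation $G_l\oplus G_r$ has the same vertex and edge sets as $G_l\otimes G_r$ and twin set $TS(G_l)$. A decomposition tree $T$ of $G$ is a rooted binary tree whose leaves are in bijection with $V(G)$, each internal node having a left and a right child and a label in $\{\otimes,\odot,\oplus\}$; for each node $v$ define $\hat G(v)$ and $\hat{TS}(v)$ recursively: for a leaf $x$, the single-vertex graph on $x$ with twin set $\{x\}$; for an internal node $v$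 with label $\circ$ and children $v_l,v_r$, $\hat G(v)=\hat G(v_l)\circ\hat G(v_r)$ with the corresponding twin set; and one requires $\hat G(\text{root})=G$. Then $\hat G(v)$ is the subgraph of $G$ induced by the set $\hat V(v)$ of leaves below $v$. (A graph is distance-hereditary iff it has a decomposition tree.) For a node $v$ and $0\le k\le|\hat{TS}(v)|$, call $S\subseteq\hat V(v)$ $k$-feasible if $\hat V(v)\setminus\hat{TS}(v)\subseteq N_{\hat G(v)}[S]$ and there is $X\subseteq S\cap\hat{TS}(v)$ with $|X|=k$ such that $\hat G(v)[S\setminus X]$ has a perfect matching. $\hat\gamma_k(v)$ is the minimum size of a $k$-feasible set and $\hat D_k(v)$ the family of $k$-feasible sets of that size. A paired-dominating set of a graph $H$ is a dominating set $D$ of $H$ such that $H[D]$ has a perfect matching; $\gamma_p(H)$ is the minimum size of a paired-dominating set of $H$ ($\infty$ if none exists). Set $\hat\gamma_p(v)=\gamma_p(\hat G(v))$, and let $\hat D_p(v)$ be the family of paired-dominating sets of $\hat G(v)$ of size $\hat\gamma_p(v)$. Define $\hat{mty}_{pr}(v)=1$ if $\hat D_p(v)\cap\hat D_0(v)=\emptyset$ and $\hat{mty}_{pr}(v)=0$ otherwise. *)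

From mathcomp Require Import all_boot.
Set Implicit Arguments. Unset Strict Implicit. Unset Printing Implicit Defensive.

(* Labels of internal nodes: true twin (otimes), false twin (odot), attachment (oplus). *)
Inductive lab := Otimes | Odot | Oplus.

Inductive dtree (V : Type) :=
| Leaf of V
| Node of lab & dtree V & dtree V.
Arguments Leaf {V}. Arguments Node {V}.

Section DH.
Variable V : finType.

Fixpoint leaves (t : dtree V) : seq V :=
  match t with Leaf x => [:: x] | Node _ l r => leaves l ++ leaves r end.

Fixpoint hatV (t : dtree V) : {set V} :=
  match t with Leaf x => [set x] | Node _ l r => hatV l :|: hatV r end.

Fixpoint hatTS (t : dtree V) : {set V} :=
  match t with
  | Leaf x => [set x]
  | Node Oplus l _ => hatTS l
  | Node _ l r => hatTS l :|: hatTS r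
  end.

(* edge relation of \hat G(v) (its vertex set is hatV v) *)
Fixpoint hatE (t : dtree V) : rel V :=
  match t with
  | Leaf _ => fun _ _ => false
  | Node Odot l r => fun u w => hatE l u w || hatE r u w
  | Node _ l r => fun u w =>
      [|| hatE l u w, hatE r u w,
          (u \in hatTS l) && (w \in hatTS r) | (u \in hatTS r) && (w \in hatTS l)]
  end.

Fixpoint subtree (s t : dtree V) : Prop :=
  s = t \/ match t with Leaf _ => False | Node _ l r => subtree s l \/ subtree s r end.

Definition decomp_tree (e : rel V) (T : dtree V) : Prop :=
  uniq (leaves T) /\ (forall x, x \in leaves T) /\ (forall u w, hatE T u w = e u w).

Definition cnbhd (E : rel V) (S : {set V}) : {set V} :=
  [set x | (x \in S) || [exists y in S, E x y]].

Definition has_pm (E : rel V) (D : {set V}) : bool :=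
  [exists M : {set {set V}},
     [forall A in M, exists x, exists y,
        [&& A == [set x; y], x != y, E x y, x \in D & y \in D]] &&
     [forall x in D, #|[set A in M | x \in A]| == 1]].

(* minimum size of a set satisfying P; None stands for infinity *)
Definition omin (P : pred {set V}) : option nat :=
  if [exists S, P S] then Some (\big[minn/#|V|]_(S | P S) #|S|) else None.

Definition pds (t : dtree V) : pred {set V} := fun D =>
  [&& D \subset hatV t, hatV t \subset cnbhd (hatE t) D & has_pm (hatE t) D].

Definition kfeas (k : nat) (t : dtree V) : pred {set V} := fun S =>
  [&& S \subset hatV t, hatV t :\: hatTS t \subset cnbhd (hatE t) S &
      [exists X : {set V}, [&& X \subset S :&: hatTS t, #|X| == k &
                               has_pm (hatE t) (S :\: X)]]].

Definition gamma_p (t : dtree V) : option nat := omin (pds t).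
Definition gamma_k (k : nat) (t : dtree V) : option nat := omin (kfeas k t).

Definition Dp (t : dtree V) : pred {set V} := fun S =>
  pds t S && (gamma_p t == Some #|S|).
Definition Dk (k : nat) (t : dtree V) : pred {set V} := fun S =>
  kfeas k t S && (gamma_k k t == Some #|S|).

Definition mty_pr (t : dtree V) : nat :=
  if [exists S, Dp t S && Dk 0 t S] then 0 else 1.

End DH.

Definition oadd (a b : option nat) : option nat :=
  match a, b with Some x, Some y => Some (x + y) | _, _ => None end.

(* At a false-twin node the graph is the disjoint union of the two children, so
   paired-dominating sets split along the children and their minimum sizes add.
   At the other two nodes every twin vertex of the left child is adjacent to every
   twin vertex of the right child.  A 0-feasible set S leaves only twin vertices
   undominated; adding an adjacent pair x in TS(v_l), y in TS(v_r) containing an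
   undominated vertex (hence disjoint from S) dominates all of them and extends
   the matching.  So gamma_0 <= gamma_p <= gamma_0 + 2, and as both sets carry a
   perfect matching both sizes are even: gamma_p = gamma_0 exactly when some
   set is minimum for both problems. *)

From mathcomp Require Import all_boot zify.
Set Implicit Arguments. Unset Strict Implicit. Unset Printing Implicit Defensive.

Section PairedDomination.
Variable V : finType.
Implicit Types (o : lab) (t l r : dtree V) (E : rel V) (A D S X : {set V}) (P Q : pred {set V}).

Variant omin_spec P : option nat -> Prop :=
| OminNone of (forall S, ~~ P S) : omin_spec P None
| OminSome S of P S & (forall S', P S' -> #|S| <= #|S'|) : omin_spec P (Some #|S|).

Lemma bigmin_le (I : eqType) (s : seq I) (p : pred I) (F : I -> nat) m i :
  i \in s -> p i -> \big[minn/m]_(j <- s | p j) F j <= F i.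
Proof.
elim: s => // j s IHs; rewrite inE big_cons => /predU1P[<- -> | /IHs le_i pi].
  exact: geq_minl.
by case: ifP => _; [rewrite geq_min le_i ?orbT | exact: le_i].
Qed.

Lemma ominP P : omin_spec P (omin P).
Proof.
rewrite /omin; case: existsP => [[S0 PS0] | noP]; last first.
  by constructor=> S; apply/negP => PS; apply: noP; exists S.
have [S PS minS] := arg_minnP (fun S => #|S|) PS0.
suff -> : \big[minn/#|V|]_(S' | P S') #|S'| = #|S| by constructor.
apply/eqP; rewrite eqn_leq bigmin_le ?mem_index_enum //=.
by elim/big_ind: _ => // [|a b]; [exact: max_card | rewrite leq_min => ->].
Qed.

Lemma card_split_disjoint A1 A2 S :
  [disjoint A1 & A2] -> S \subset A1 :|: A2 -> #|S| = #|S :&: A1| + #|S :&: A2|.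
Proof.
move=> dis sS; suff <- : S :\: A1 = S :&: A2 by rewrite cardsID.
apply/setP => x; rewrite !inE; case: (boolP (x \in S)) => [xS|_]; rewrite ?andbT ?andbF //.
have /setUP[x1 | x2] := subsetP sS x xS; first by rewrite x1 (disjointFr dis x1).
by rewrite x2 (disjointFl dis x2).
Qed.

Lemma omin_additive P P1 P2 A1 A2 :
  [disjoint A1 & A2] ->
  (forall S, P1 S -> S \subset A1) -> (forall S, P2 S -> S \subset A2) ->
  (forall S, P S = [&& S \subset A1 :|: A2, P1 (S :&: A1) & P2 (S :&: A2)]) ->
  omin P = oadd (omin P1) (omin P2).
Proof.
move=> dis sP1 sP2 PE.
case: (ominP P1) => [no1 | S1 PS1 min1].
  by case: (ominP P) => // S; rewrite PE (negbTE (no1 _)) andbF.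
case: (ominP P2) => [no2 | S2 PS2 min2].
  by case: (ominP P) => // S; rewrite PE (negbTE (no2 _)) !andbF.
have S12_1 : (S1 :|: S2) :&: A1 = S1.
  rewrite setIUl (setIidPl (sP1 _ PS1)) disjoint_setI0 ?setU0 //.
  by apply: disjointWl (sP2 _ PS2) _; rewrite disjoint_sym.
have S12_2 : (S1 :|: S2) :&: A2 = S2.
  by rewrite setIUl (setIidPl (sP2 _ PS2)) disjoint_setI0 ?set0U // (disjointWl (sP1 _ PS1) dis).
have PS12 : P (S1 :|: S2) by rewrite PE S12_1 S12_2 PS1 PS2 setUSS ?sP1 ?sP2.
have card12 : #|S1 :|: S2| = #|S1| + #|S2|.
  by rewrite (card_split_disjoint dis) ?S12_1 ?S12_2 // setUSS ?sP1 ?sP2.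
case: (ominP P) => [noP | S PS minS]; first by have := noP (S1 :|: S2); rewrite PS12.
congr Some; apply/eqP; rewrite eqn_leq -card12 minS //=.
move: PS; rewrite PE => /and3P[sS PS_1 PS_2].
by rewrite (card_split_disjoint dis sS) card12 leq_add ?min1 ?min2.
Qed.

(* The second summand is [2 * mty_pr t] with [Dp] and [Dk] unfolded. *)
Lemma omin_even_gap P Q :
  (forall S, P S -> Q S) -> (forall S, Q S -> exists2 D, P D & #|D| <= #|S| + 2) ->
  (forall S, Q S -> ~~ odd #|S|) ->
  omin P = oadd (omin Q) (Some (2 * (if [exists S, (P S && (omin P == Some #|S|))
                                                   && (Q S && (omin Q == Some #|S|))]
                                     then 0 else 1))).
Proof.
move=> PQ extend evenQ.
case: (ominP Q) => [noQ | S0 QS0 minS0].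
  by case: (ominP P) => // S /PQ QS; have := noQ S; rewrite QS.
have [D PD leD] := extend S0 QS0.
case: (ominP P) => [noP | S PS minS]; first by have := noP D; rewrite PD.
have geS : #|S0| <= #|S| by exact/minS0/PQ.
have leS : #|S| <= #|S0| + 2 by exact: leq_trans (minS D PD) leD.
case: existsP => [[S' /andP[/andP[_ /eqP[<-]] /andP[_ /eqP[->]]]] | noboth].
  by rewrite muln0 /= addn0.
have neS : #|S| != #|S0|.
  by apply/eqP => eS; apply: noboth; exists S; rewrite PS PQ // eS !eqxx.
have neS1 : #|S| != #|S0| + 1.
  by apply: contraNneq (evenQ _ (PQ _ PS)) => ->; rewrite addn1 /= evenQ.
rewrite muln1; congr Some; lia.
Qed.

Definition perfect_matching E D (M : {set {set V}}) :=
  {in M, forall A, exists x y, [/\ A = [set x; y], x != y, E x y, x \in D & y \in D]}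
  /\ {in D, forall x, #|[set A in M | x \in A]| = 1}.

Lemma has_pmP E D : reflect (exists M, perfect_matching E D M) (has_pm E D).
Proof.
apply: (iffP existsP) => [[M /andP[/forallP pairs /forallP once]] | [M [pairs once]]].
  exists M; split=> [A MA | x Dx].
    have /existsP[x /existsP[y /and5P[/eqP-> ? ? ? ?]]] := implyP (pairs A) MA.
    by exists x, y.
  exact/eqP/(implyP (once x)).
exists M; apply/andP; split; apply/forallP; last by move=> x; apply/implyP => /once->.
move=> A; apply/implyP => MA; have [x [y [-> ? ? ? ?]]] := pairs A MA.
by apply/existsP; exists x; apply/existsP; exists y; rewrite eqxx; apply/and5P.
Qed.

Lemma perfect_matching_sub E D M A : perfect_matching E D M -> A \in M -> A \subset D.
Proof.
by case=> pairs _ MA; have [x [y [-> _ _ Dx Dy]]] := pairs A MA; rewrite subUset !sub1set Dx.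
Qed.

Lemma perfect_matching_partition E D M : perfect_matching E D M -> partition M D.
Proof.
move=> pmM; have [pairs once] := pmM.
apply/and3P; split.
- rewrite eqEsubset; apply/andP; split.
    by apply/bigcupsP => A; apply: perfect_matching_sub pmM.
  apply/subsetP => x Dx; have /card_gt0P[A] : 0 < #|[set A in M | x \in A]| by rewrite once.
  by rewrite inE => /andP[MA xA]; apply/bigcupP; exists A.
- apply/trivIsetP => A B MA MB neAB; apply/pred0P => x /=; apply/negP => /andP[xA xB].
  have Dx : x \in D := subsetP (perfect_matching_sub pmM MA) x xA.
  have : #|[set A; B]| <= #|[set A in M | x \in A]|.
    by apply/subset_leq_card/subsetP => C; rewrite !inE => /orP[]/eqP->; rewrite ?MA ?MB.
  by rewrite once // cards2 neAB.
- apply/negP => M0; have [x [y [/setP/(_ x)]]] := pairs _ M0.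
  by rewrite !inE eqxx.
Qed.

Lemma has_pm_even E D : has_pm E D -> ~~ odd #|D|.
Proof.
case/has_pmP => M pmM; rewrite (card_partition (perfect_matching_partition pmM)).
rewrite (eq_bigr (fun _ => 2)) ?sum_nat_const ?oddM ?andbF // => A MA.
by have [x [y [-> neq _ _ _]]] := pmM.1 A MA; rewrite cards2 neq.
Qed.

Lemma has_pm_setI E E' D X :
  (forall x y, x \in D -> y \in D -> E x y -> (x \in X) || (y \in X) ->
     [&& x \in X, y \in X & E' x y]) ->
  has_pm E D -> has_pm E' (D :&: X).
Proof.
move=> closedX /has_pmP[M [pairs once]]; apply/has_pmP.
have inX A x : A \in M -> x \in A -> x \in X -> A \subset X.
  move=> MA; have [a [b [-> _ Eab Da Db]]] := pairs A MA.
  rewrite !inE => xab xX; have /and3P[aX bX _] : [&& a \in X, b \in X & E' a b].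
    by apply: closedX => //; case/orP: xab => /eqP <-; rewrite xX ?orbT.
  by rewrite subUset !sub1set aX bX.
exists [set A in M | A \subset X]; split=> [A | x].
  rewrite inE => /andP[MA sAX]; have [a [b [eA neab Eab Da Db]]] := pairs A MA.
  have [aX bX] : a \in X /\ b \in X by rewrite !(subsetP sAX) // eA !inE eqxx ?orbT.
  have /and3P[_ _ E'ab] : [&& a \in X, b \in X & E' a b] by rewrite closedX ?aX.
  by exists a, b; rewrite !inE Da Db aX bX.
rewrite inE => /andP[Dx xX]; rewrite -(once x Dx); congr #|pred_of_set _|.
apply/setP => A; rewrite !inE; case: (boolP (A \in M)) => //= MA.
by case: (boolP (x \in A)) => xA; rewrite ?andbT ?andbF // (inX A x).
Qed.

Lemma has_pm_subrel E E' D : subrel E E' -> has_pm E D -> has_pm E' D.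
Proof.
move=> sEE' pmD; rewrite -(setIT D); apply: has_pm_setI pmD => x y _ _ /sEE' E'xy _.
by rewrite !inE.
Qed.

Lemma has_pm_setU E D1 D2 :
  [disjoint D1 & D2] -> has_pm E D1 -> has_pm E D2 -> has_pm E (D1 :|: D2).
Proof.
have once_setU M1 M2 D D' x : perfect_matching E D M1 -> perfect_matching E D' M2 ->
    [disjoint D & D'] -> x \in D -> #|[set A in M1 :|: M2 | x \in A]| = 1.
  move=> pm1 pm2 dis Dx; rewrite -(pm1.2 x Dx); congr #|pred_of_set _|.
  apply/setP => A; rewrite !inE; case: (boolP (x \in A)) => xA; rewrite ?andbF //.
  case: (boolP (A \in M2)) => M2A; rewrite ?orbF //.
  by rewrite (disjointFl dis (subsetP (perfect_matching_sub pm2 M2A) x xA)) in Dx.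
move=> dis /has_pmP[M1 pm1] /has_pmP[M2 pm2]; apply/has_pmP; exists (M1 :|: M2); split.
  move=> A /setUP[/pm1.1 | /pm2.1] [x [y [-> nexy Exy Dx Dy]]];
    by exists x, y; rewrite !inE Dx Dy ?orbT.
move=> x /setUP[D1x | D2x]; first exact: once_setU pm1 pm2 dis D1x.
by rewrite setUC; apply: once_setU pm2 pm1 _ D2x; rewrite disjoint_sym.
Qed.

Lemma has_pm_edge E x y : x != y -> E x y -> has_pm E [set x; y].
Proof.
move=> nexy Exy; apply/has_pmP; exists [set [set x; y]]; split=> [A | z xyz].
  by rewrite inE => /eqP->; exists x, y; rewrite !inE !eqxx ?orbT.
rewrite -[RHS](cards1 [set x; y]); congr #|pred_of_set _|.
by apply/setP => A; rewrite !inE; case: eqP => // ->; rewrite xyz.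
Qed.

Lemma cnbhdP E S x :
  reflect (x \in S \/ exists2 y, y \in S & E x y) (x \in cnbhd E S).
Proof.
rewrite inE; apply: (iffP orP) => [[-> | /existsP[y /andP[]]] | [-> | [y yS Exy]]];
  by [left | right; exists y | left | right; apply/existsP; exists y; rewrite yS].
Qed.

Lemma cnbhd_self E S x : x \in S -> x \in cnbhd E S.
Proof. by move=> xS; apply/cnbhdP; left. Qed.

Lemma cnbhd_edge E S x y : y \in S -> E x y -> x \in cnbhd E S.
Proof. by move=> yS Exy; apply/cnbhdP; right; exists y. Qed.

Lemma cnbhdU E S1 S2 : cnbhd E (S1 :|: S2) = cnbhd E S1 :|: cnbhd E S2.
Proof.
apply/setP => x; apply/cnbhdP/setUP => [[/setUP[] xS | [y /setUP[] yS Exy]] | ].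
- by left; apply: cnbhd_self.
- by right; apply: cnbhd_self.
- by left; apply: cnbhd_edge Exy.
- by right; apply: cnbhd_edge Exy.
by case=> /cnbhdP[xS | [y yS Exy]]; [left | right | left | right];
  rewrite ?inE ?xS ?orbT //; exists y; rewrite ?inE ?yS ?orbT.
Qed.

Lemma cnbhdS E E' S S' : subrel E E' -> S \subset S' -> cnbhd E S \subset cnbhd E' S'.
Proof.
move=> sEE' sSS'; apply/subsetP => x /cnbhdP[/(subsetP sSS') | [y /(subsetP sSS') yS' /sEE']].
  exact: cnbhd_self.
exact: cnbhd_edge.
Qed.

Section Component.
Variables (E E1 E2 : rel V) (W1 W2 : {set V}).
Hypothesis E_split : forall x y, E x y -> E1 x y || E2 x y.
Hypothesis E1_W1 : forall x y, E1 x y -> (x \in W1) && (y \in W1).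
Hypothesis E2_W2 : forall x y, E2 x y -> (x \in W2) && (y \in W2).
Hypothesis W1_W2 : [disjoint W1 & W2].

Lemma cnbhd_component D : W1 \subset cnbhd E D -> W1 \subset cnbhd E1 (D :&: W1).
Proof.
move=> domW1; apply/subsetP => x xW1.
case/cnbhdP: (subsetP domW1 x xW1) => [xD | [y yD /E_split/orP[E1xy | E2xy]]].
- by apply: cnbhd_self; rewrite inE xD.
- have /andP[_ yW1] := E1_W1 E1xy.
  by apply: (cnbhd_edge (y := y)) E1xy; rewrite inE yD.
- by have /andP[xW2 _] := E2_W2 E2xy; rewrite (disjointFr W1_W2 xW1) in xW2.
Qed.

Lemma has_pm_component D : has_pm E D -> has_pm E1 (D :&: W1).
Proof.
apply: has_pm_setI => x y _ _ /E_split/orP[E1xy | /E2_W2/andP[xW2 yW2]] xyW1.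
  by have /andP[-> ->] := E1_W1 E1xy.
by rewrite (disjointFl W1_W2 xW2) (disjointFl W1_W2 yW2) in xyW1.
Qed.

End Component.

Lemma mem_hatV t x : (x \in hatV t) = (x \in leaves t).
Proof. by elim: t => [y | o l IHl r IHr] /=; rewrite !inE ?mem_cat ?IHl ?IHr. Qed.

Lemma subtree_uniq s t : subtree s t -> uniq (leaves t) -> uniq (leaves s).
Proof.
elim: t => [x | o l IHl r IHr] /=; first by case=> // ->.
by case=> [-> // | [/IHl sub_l | /IHr sub_r]]; rewrite cat_uniq => /and3P[? _ ?]; auto.
Qed.

Lemma disjoint_children o l r :
  uniq (leaves (Node o l r)) -> [disjoint hatV l & hatV r].
Proof.
rewrite /= cat_uniq => /and3P[_ /hasPn nlr _]; apply/pred0P => x /=.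
by apply/negP => /andP[]; rewrite !mem_hatV => xl /nlr; rewrite xl.
Qed.

Lemma hatTS_sub t : hatTS t \subset hatV t.
Proof.
elim: t => [x | [] l IHl r IHr] //=; rewrite ?setUSS //.
exact: subset_trans IHl (subsetUl _ _).
Qed.

Lemma hatTS_node o l r : hatTS (Node o l r) \subset hatTS l :|: hatTS r.
Proof. by case: o => /=; rewrite ?subsetUl. Qed.

Lemma hatTS_neq0 t : hatTS t != set0.
Proof.
elim: t => [x | o l /set0Pn[x xl] r _]; apply/set0Pn; exists x; first by rewrite inE.
by case: o; rewrite /= ?inE xl.
Qed.

Lemma hatE_hatV t u w : hatE t u w -> (u \in hatV t) && (w \in hatV t).
Proof.
have inV := subsetP (hatTS_sub _).
elim: t => [// | o l IHl r IHr]; rewrite !inE.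
have split_edge : hatE (Node o l r) u w ->
    [|| hatE l u w, hatE r u w, (u \in hatTS l) && (w \in hatTS r)
      | (u \in hatTS r) && (w \in hatTS l)].
  by case: o => //= /orP[] ->; rewrite ?orbT.
by case/split_edge/or4P =>
  [/IHl/andP[-> ->] | /IHr/andP[-> ->] | /andP[/inV-> /inV->] | /andP[/inV-> /inV->]];
  rewrite ?orbT.
Qed.

Lemma hatE_sym t : symmetric (hatE t).
Proof.
elim: t => [// | o l IHl r IHr] u w; case: o => /=; rewrite IHl IHr //;
  by rewrite [(w \in hatTS l) && _]andbC [(w \in hatTS r) && _]andbC
             [((u \in hatTS r) && _) || _]orbC.
Qed.

Lemma hatE_twins o l r u w :
  o <> Odot -> u \in hatTS l -> w \in hatTS r -> hatE (Node o l r) u w.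
Proof. by case: o => // _ ul wr /=; rewrite ul wr !orbT. Qed.

Lemma kfeas0E t S :
  kfeas 0 t S =
  [&& S \subset hatV t, hatV t :\: hatTS t \subset cnbhd (hatE t) S & has_pm (hatE t) S].
Proof.
rewrite /kfeas; congr [&& _, _ & _]; apply/existsP/idP => [[X] | pmS].
  by case/and3P => _ /eqP/cards0_eq->; rewrite setD0.
by exists set0; rewrite sub0set cards0 setD0.
Qed.

Lemma pds_sub t S : pds t S -> S \subset hatV t.
Proof. by case/and3P. Qed.

Lemma pds_kfeas0 t S : pds t S -> kfeas 0 t S.
Proof.
case/and3P => sSV domS pmS; rewrite kfeas0E sSV pmS andbT.
exact: subset_trans (subsetDl _ _) domS.
Qed.

Lemma pds_odot l r S :
  [disjoint hatV l & hatV r] ->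
  pds (Node Odot l r) S =
  [&& S \subset hatV l :|: hatV r, pds l (S :&: hatV l) & pds r (S :&: hatV r)].
Proof.
move=> dis; have El := @hatE_hatV l; have Er := @hatE_hatV r.
have dis' : [disjoint hatV r & hatV l] by rewrite disjoint_sym.
apply/and3P/and3P => [[sSV domS pmS] | [sSV /and3P[_ dom_l pm_l] /and3P[_ dom_r pm_r]]].
  have split_l : forall x y, hatE (Node Odot l r) x y -> hatE l x y || hatE r x y by [].
  have split_r : forall x y, hatE (Node Odot l r) x y -> hatE r x y || hatE l x y.
    by move=> x y; rewrite /= orbC.
  split=> //; apply/and3P; split; rewrite ?subsetIr //.
  - by apply: (cnbhd_component split_l El Er dis); apply: subset_trans domS; apply: subsetUl.
  - exact: (has_pm_component split_l El Er dis).
  - by apply: (cnbhd_component split_r Er El dis'); apply: subset_trans domS; apply: subsetUr.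
  - exact: (has_pm_component split_r Er El dis').
have eS : S = (S :&: hatV l) :|: (S :&: hatV r) by rewrite -setIUr; apply/esym/setIidPl.
have sub_l : subrel (hatE l) (hatE (Node Odot l r)) by move=> x y /= ->.
have sub_r : subrel (hatE r) (hatE (Node Odot l r)) by move=> x y /= ->; rewrite orbT.
split=> //; rewrite eS.
  rewrite /= cnbhdU setUSS //.
  - exact: subset_trans dom_l (cnbhdS sub_l (subxx _)).
  - exact: subset_trans dom_r (cnbhdS sub_r (subxx _)).
apply: has_pm_setU; first exact: disjointW (subsetIr _ _) (subsetIr _ _) dis.
- exact: has_pm_subrel pm_l.
- exact: has_pm_subrel pm_r.
Qed.

Lemma gamma_p_odot l r :
  [disjoint hatV l & hatV r] ->
  gamma_p (Node Odot l r) = oadd (gamma_p l) (gamma_p r).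
Proof.
by move=> dis; apply: (omin_additive dis (@pds_sub l) (@pds_sub r)) => S; apply: pds_odot.
Qed.

Lemma pair_dominates_twins o l r x y :
  o <> Odot -> x \in hatTS l -> y \in hatTS r ->
  hatTS l :|: hatTS r \subset cnbhd (hatE (Node o l r)) [set x; y].
Proof.
move=> twin xl yr; apply/subsetP => u /setUP[ul | ur].
  by apply: (cnbhd_edge (y := y)); [rewrite !inE eqxx orbT | exact: hatE_twins].
by apply: (cnbhd_edge (y := x)); [rewrite !inE eqxx | rewrite hatE_sym; exact: hatE_twins].
Qed.

Lemma kfeas0_extend o l r S :
  o <> Odot -> [disjoint hatV l & hatV r] -> kfeas 0 (Node o l r) S ->
  exists2 D, pds (Node o l r) D & #|D| <= #|S| + 2.
Proof.
set t := Node o l r; move=> twin dis; rewrite kfeas0E => /and3P[sSV domS pmS].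
have [domV | /subsetPn[z zV zN]] := boolP (hatV t \subset cnbhd (hatE t) S).
  by exists S; rewrite ?leq_addr // /pds sSV domV pmS.
have zTS : z \in hatTS l :|: hatTS r.
  apply: (subsetP (hatTS_node o l r)); apply: contraR zN => zTS.
  by apply: (subsetP domS); rewrite inE zTS zV.
have [x [y [xl yr zxy]]] :
    exists x y, [/\ x \in hatTS l, y \in hatTS r & z \in [set x; y]].
  have /set0Pn[a al] := hatTS_neq0 l; have /set0Pn[b br] := hatTS_neq0 r.
  by case/setUP: zTS => [zl | zr]; [exists z, b | exists a, z]; rewrite !inE eqxx ?orbT.
have Exy : hatE t x y by exact: hatE_twins.
have xy_notin_S w : w \in [set x; y] -> w \notin S.
  have Eyx : hatE t y x by rewrite hatE_sym.
  move=> wxy; apply: contra zN.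
  case/set2P: zxy => ->; case/set2P: wxy => -> wS; try exact: cnbhd_self.
    exact: cnbhd_edge wS Exy.
  exact: cnbhd_edge wS Eyx.
have nexy : x != y.
  apply: contraTneq xl => ->; apply: contraTN (subsetP (hatTS_sub r) y yr) => yl.
  by rewrite (disjointFr dis (subsetP (hatTS_sub l) y yl)).
exists ([set x; y] :|: S).
  rewrite /pds subUset sSV andbT; apply/and3P; split.
  - rewrite subUset !sub1set /= !inE (subsetP (hatTS_sub l) x xl).
    by rewrite (subsetP (hatTS_sub r) y yr) orbT.
  - apply/subsetP => v vV; rewrite cnbhdU inE.
    case: (boolP (v \in hatTS t)) => [vTS | vnTS].
      by rewrite (subsetP (pair_dominates_twins twin xl yr)) ?(subsetP (hatTS_node o l r)).
    by rewrite (subsetP domS) ?orbT // inE vnTS.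
  - apply: has_pm_setU => //; last exact: has_pm_edge.
    by rewrite disjoint_subset; apply/subsetP => w wxy; rewrite inE xy_notin_S.
by rewrite addnC; apply: leq_trans (leq_card_setU _ _) _; rewrite leq_add2r cards2 nexy.
Qed.

Lemma gamma_p_twin o l r :
  o <> Odot -> [disjoint hatV l & hatV r] ->
  gamma_p (Node o l r) = oadd (gamma_k 0 (Node o l r)) (Some (2 * mty_pr (Node o l r))).
Proof.
move=> twin dis; apply: omin_even_gap => [S | S | S]; first exact: pds_kfeas0.
  exact: kfeas0_extend.
by rewrite kfeas0E => /and3P[_ _ /has_pm_even].
Qed.

End PairedDomination.

Theorem lemma2 (V : finType) (e : rel V)
  (e_sym : symmetric e) (e_irr : irreflexive e)
  (T : dtree V) (hT : decomp_tree e T)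
  (o : lab) (vl vr : dtree V) (hv : subtree (Node o vl vr) T) :
  (o = Odot -> gamma_p (Node o vl vr) = oadd (gamma_p vl) (gamma_p vr)) /\
  (o <> Odot -> gamma_p (Node o vl vr) =
                oadd (gamma_k 0 (Node o vl vr)) (Some (2 * mty_pr (Node o vl vr)))).
Proof.
have dis := disjoint_children (subtree_uniq hv hT.1).
by split=> [-> | twin]; [exact: gamma_p_odot | exact: gamma_p_twin].
Qed.
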